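(* For every $n\in\mathbb{N}$, $\mathcal{D}_{p/q}(\mu_n)=\mu_{n+1}$.
   Context: Let $p>q>1$ be coprime integers, $A_p=\{0,\dots,p-1\}$, $A_q=\{0,\dots,q-1\}$ and $B=\{p-(2q-1),\dots,p-1\}$. For $n\in\mathbb{N}$ and $a\in\mathbb{Z}$, let $\tau(n,a)=\frac{np+a}{q}$, defined only when $q$ divides $np+a$. Let $\mathcal{T}_{p/q}$ be the deterministic automaton with state set $\mathbb{N}$, alphabet $A_p$, initial state $0$, and transitions $n\xrightarrow{a}\tau(n,a)$ for $a\in A_p$ with $\tau(n,a)$ defined. Every state $n$ has exactly one outgoing transition labelled by a letter of $A_q$; the minimal word $\mu_n\in A_q^{\omega}$ is the unique infinite word over $A_q$ labelling a path of $\mathcal{T}_{p/q}$ starting at state $n$. For $a\in B$ let $\omega(a)=\{(b,c)\in A_q\times A_q : c-b=a-(p-q)\}$. The transducer $\mathcal{D}_{p/q}$ has state set $\mathbb{N}$, input and output alphabet $A_q$, initial state $0$, and a transition $n\xrightarrow{b|c}\tau(n,a)$ (input $b$, output $c$) for every $n\in\mathbb{N}$, $a\in B$ with $\tau(n,a)$ defined, and $(b,c)\in\omega(a)$; no other transitions. The image $\mathcal{D}_{p/q}(w)$ of an infinite word $w$ is the infinite word $w'$ such that for every finite prefix $u$ of $w$, the output produced along the path from state $0$ reading input $u$ is a prefix of $w'$. *)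

From Stdlib Require Import ZArith.
Open Scope Z_scope.

(* Infinite words (letters are integers; membership in the alphabet is stated separately). *)
Definition word := nat -> Z.

Definition inA (k a : Z) : Prop := 0 <= a < k.

Definition inB (p q a : Z) : Prop := p - (2 * q - 1) <= a <= p - 1.

(* n --a--> m, i.e. tau(n,a) is defined (q divides np+a and the result is a
   state in N) and equals m : q*m = n*p + a. *)
Definition tau_rel (p q : Z) (n : nat) (a : Z) (m : nat) : Prop :=
  q * Z.of_nat m = Z.of_nat n * p + a.

Definition inOmega (p q a b c : Z) : Prop :=
  inA q b /\ inA q c /\ c - b = a - (p - q).

(* w ∈ A_q^omega labels an (infinite) path of T_{p/q} starting at state n;
   by the context there is exactly one such word, namely mu_n. *)
Definition is_min_word (p q : Z) (n : nat) (w : word) : Prop :=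
  exists s : nat -> nat, s 0%nat = n /\
    forall i : nat, inA q (w i) /\ tau_rel p q (s i) (w i) (s (S i)).

Definition D_run (p q : Z) (k : nat) (w : word) (c : word) (s : nat -> nat) : Prop :=
  s 0%nat = 0%nat /\
  forall i : nat, (i < k)%nat ->
    exists a : Z, inB p q a /\ tau_rel p q (s i) a (s (S i)) /\ inOmega p q a (w i) (c i).

(* D_{p/q}(w) = w' : every finite prefix of w can be read from state 0, and the
   output produced along any such path is a prefix of w'. *)
Definition D_image (p q : Z) (w w' : word) : Prop :=
  (forall k : nat, exists (c : word) (s : nat -> nat), D_run p q k w c s) /\
  (forall (k : nat) (c : word) (s : nat -> nat), D_run p q k w c s ->
     forall i : nat, (i < k)%nat -> c i = w' i).

(* If [s] and [t] are the paths of T_{p/q} labelled by mu_n and mu_{n+1}, then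
   t_i > s_i for all i, and subtracting the two transition equations
   q s_{i+1} = p s_i + u_i and q t_{i+1} = p t_i + v_i shows that
   t_i - s_i - 1 moves to t_{i+1} - s_{i+1} - 1 under the letter
   v_i - u_i + p - q of B, i.e. D_{p/q} reads u_i and writes v_i.  Conversely,
   from state t_i - s_i - 1 any output c on input u_i satisfies
   c = v_i mod q, hence c = v_i since both lie in A_q. *)
From Stdlib Require Import ZArith Lia.
Open Scope Z_scope.

Lemma eq_of_mul_eq_sub (q k x y : Z) :
  inA q x -> inA q y -> q * k = x - y -> x = y.
Proof.
  unfold inA; intros Hx Hy Hk.
  destruct (Z.lt_trichotomy k 0) as [Hneg | [Hzero | Hpos]]; nia.
Qed.

Section Transitions.

Variables p q : Z.

Lemma tau_rel_lt (s t s' t' : nat) (a b : Z) : q < p ->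
  inA q a -> inA q b -> (s < t)%nat ->
  tau_rel p q s a s' -> tau_rel p q t b t' -> (s' < t')%nat.
Proof.
  unfold inA, tau_rel; intros Hpq Ha Hb Hst Hs Ht.
  apply Nat2Z.inj_lt; apply Nat2Z.inj_lt in Hst.
  assert (Hpos : 0 < q * (Z.of_nat t' - Z.of_nat s')) by nia.
  nia.
Qed.

Lemma tau_rel_sub (s t s' t' r r' : nat) (a b : Z) :
  tau_rel p q s a s' -> tau_rel p q t b t' ->
  Z.of_nat r = Z.of_nat t - Z.of_nat s - 1 ->
  Z.of_nat r' = Z.of_nat t' - Z.of_nat s' - 1 ->
  tau_rel p q r (b - a + p - q) r'.
Proof. unfold tau_rel; intros Hs Ht Hr Hr'; rewrite Hr, Hr'; nia. Qed.

Lemma inB_sub (a b : Z) : inA q a -> inA q b -> inB p q (b - a + p - q).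
Proof. unfold inA, inB; lia. Qed.

Lemma inOmega_sub (a b : Z) : inA q a -> inA q b -> inOmega p q (b - a + p - q) a b.
Proof. unfold inOmega, inA; lia. Qed.

Lemma tau_rel_sub_unique (s t s' t' r r' : nat) (a b c d : Z) :
  tau_rel p q s a s' -> tau_rel p q t b t' -> inA q b ->
  Z.of_nat r = Z.of_nat t - Z.of_nat s - 1 ->
  tau_rel p q r d r' -> inOmega p q d a c ->
  c = b /\ Z.of_nat r' = Z.of_nat t' - Z.of_nat s' - 1.
Proof.
  unfold tau_rel, inOmega, inA in *; intros Hs Ht Hb Hr Hd [Ha [Hc Hcd]].
  rewrite Hr in Hd.
  assert (Hcb : c = b).
  { apply (eq_of_mul_eq_sub q
      (Z.of_nat r' - (Z.of_nat t' - Z.of_nat s' - 1))); auto; nia. }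
  split; [exact Hcb | subst c; nia].
Qed.

Section TwoPaths.

Variables (s t : nat -> nat) (u v : word).
Hypothesis Hs : forall i, inA q (u i) /\ tau_rel p q (s i) (u i) (s (S i)).
Hypothesis Ht : forall i, inA q (v i) /\ tau_rel p q (t i) (v i) (t (S i)).
Hypothesis Hst0 : t 0%nat = S (s 0%nat).

Section Expanding.

Hypothesis Hpq : q < p.

Lemma paths_lt (i : nat) : (s i < t i)%nat.
Proof.
  induction i as [|i IH]; [rewrite Hst0; lia|].
  destruct (Hs i) as [Hu Hsi], (Ht i) as [Hv Hti].
  exact (tau_rel_lt _ _ _ _ _ _ Hpq Hu Hv IH Hsi Hti).
Qed.

Lemma D_run_paths_sub (k : nat) :
  D_run p q k u v (fun i => (t i - s i - 1)%nat).
Proof.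
  split; [rewrite Hst0; lia|].
  intros i _.
  destruct (Hs i) as [Hu Hsi], (Ht i) as [Hv Hti].
  pose proof (paths_lt i); pose proof (paths_lt (S i)).
  exists (v i - u i + p - q); split; [|split].
  - exact (inB_sub _ _ Hu Hv).
  - apply (tau_rel_sub _ _ _ _ _ _ _ _ Hsi Hti); rewrite !Nat2Z.inj_sub; lia.
  - exact (inOmega_sub _ _ Hu Hv).
Qed.

End Expanding.

Lemma D_run_state (k : nat) (c : word) (r : nat -> nat) :
  D_run p q k u c r -> forall i, (i <= k)%nat ->
  Z.of_nat (r i) = Z.of_nat (t i) - Z.of_nat (s i) - 1.
Proof.
  intros [Hr0 Hr] i.
  induction i as [|i IH]; intros Hik; [rewrite Hr0, Hst0; lia|].
  destruct (Hr i ltac:(lia)) as [d [_ [Hd Hom]]].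
  destruct (Hs i) as [_ Hsi], (Ht i) as [Hv Hti].
  exact (proj2 (tau_rel_sub_unique _ _ _ _ _ _ _ _ _ _
                  Hsi Hti Hv (IH ltac:(lia)) Hd Hom)).
Qed.

Lemma D_run_output (k : nat) (c : word) (r : nat -> nat) :
  D_run p q k u c r -> forall i, (i < k)%nat -> c i = v i.
Proof.
  intros Hrun i Hik.
  destruct (proj2 Hrun i Hik) as [d [_ [Hd Hom]]].
  destruct (Hs i) as [_ Hsi], (Ht i) as [Hv Hti].
  exact (proj1 (tau_rel_sub_unique _ _ _ _ _ _ _ _ _ _
                  Hsi Hti Hv (D_run_state k c r Hrun i ltac:(lia)) Hd Hom)).
Qed.

End TwoPaths.

End Transitions.

Theorem mainTheorem3 (p q : Z) (Hq : 1 < q) (Hpq : q < p) (Hcop : Z.gcd p q = 1)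
  (n : nat) (mu_n mu_n1 : word) :
  is_min_word p q n mu_n -> is_min_word p q (S n) mu_n1 ->
  D_image p q mu_n mu_n1.
Proof.
  intros [s [Hs0 Hs]] [t [Ht0 Ht]].
  assert (Hst0 : t 0%nat = S (s 0%nat)) by (rewrite Hs0, Ht0; reflexivity).
  split.
  - intro k; exists mu_n1, (fun i => (t i - s i - 1)%nat).
    exact (D_run_paths_sub p q s t mu_n mu_n1 Hs Ht Hst0 Hpq k).
  - exact (D_run_output p q s t mu_n mu_n1 Hs Ht Hst0).
Qed.
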